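(* Consider the following two-period durable goods model with a finite set $\mathcal{J}$ of single-product firms and common discount factor $\beta$. In period $t=1$ firm $j$ sells product $j$, quantity $q_{j1}$, which still works in period 2 with probability $\phi_j$ (its durability); in period $t=2$ firm $j$ sells a one-period product, quantity $q_{j2}$. Marginal costs are $c_{j1}(\phi_j)$ in period 1 and $c_{j2}$ in period 2. Consumer inventories are $\Psi_{j1}=0$, $\Psi_{j2}=\phi_j q_{j1}$; service demands are $Q_{jt}=q_{jt}+\Psi_{jt}$ (so $Q_{j1}=q_{j1}$ and $Q_{j2}=\phi_jq_{j1}+q_{j2}$). Service prices $P_{jt}$ satisfy $p_{j1}=P_{j1}+\beta\phi_jP_{j2}$ and $p_{j2}=P_{j2}$, where $p_{jt}$ are the product prices. Each $Q_{jt}$ is a function $Q_{jt}\bigl(\{\Psi_{kt}\}_{k},\{P_{kt}\}_{k},\{P_{k,t+\tau}\}_{k,\tau\neq0},\{\phi_k\}_k\bigr)$, and firm $j$'s profit can be written as $$V_j^F=\bigl(P_{j1}-c_{j1}(\phi_j)+\beta c_{j2}\phi_j\bigr)Q_{j1}+\beta\,(P_{j2}-c_{j2})\,Q_{j2}.$$ Assume: (i) $\frac{\partial Q_{jt}}{\partial \Psi_{kt}}\ge 0$ for all $j,k,t$ (dependence on consumer inventory); (ii) $Q_{jt}$ does not depend on the durabilities $\{\phi_k\}_{k\in\mathcal{J}}$ (no preference for durability per se); (iii) $Q_{jt}$ does not depend on service prices in other periods $\{P_{k,t+\tau}\}_{k\in\mathcal{J},\tau\ge1}$; and (iv) $\frac{\partial}{\partial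 \Psi_{j2}}\Bigl[\frac{\partial Q_{j2}}{\partial P_{j2}}\Bigr]\ge 0$. Suppose product $j$'s service prices $P_{j1},P_{j2}$ are exogenously given, and firm $j$ chooses its durability $\phi_j$ to maximize $V_j^F$. Then, holding $P_{j1}$ fixed, firm $j$ raises its product durability when $P_{j2}$ is higher, i.e. the profit-maximizing durability $\phi_j$ is increasing in $P_{j2}$.
   Context: This is a stylized two-period model used to interpret firms' incentives on product durability; all functions are assumed differentiable. The ''service price'' $P_{jt}$ corresponds to the rental price of the product, and $Q_{jt}$ is the total service demand (new purchases plus still-functioning units held by consumers). *)

From Stdlib Require Import Reals.
From Coquelicot Require Import Coquelicot.
Open Scope R_scope.

(* Reduced two-period model for firm j; all other firms' variables are held
   fixed and absorbed into the demand functions.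

   Q1 Psi1 P1 P2 phi : service demand Q_{j1} as a function of the consumer
                       inventory Psi_{j1}, the own service prices P_{j1}
                       (current) and P_{j2} (future), and durability phi_j.
   Q2 Psi2 P2 P1 phi : service demand Q_{j2} as a function of Psi_{j2},
                       P_{j2} (current), P_{j1} (past), and phi_j.

   Consumer inventories: Psi_{j1} = 0, Psi_{j2} = phi_j * q_{j1} = phi_j * Q_{j1}. *)

Definition Qj1 (Q1 : R -> R -> R -> R -> R) (P1 P2 phi : R) : R :=
  Q1 0 P1 P2 phi.

Definition Qj2 (Q1 Q2 : R -> R -> R -> R -> R) (P1 P2 phi : R) : R :=
  Q2 (phi * Qj1 Q1 P1 P2 phi) P2 P1 phi.

Definition VF (beta c2 : R) (c1 : R -> R) (Q1 Q2 : R -> R -> R -> R -> R)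
  (P1 P2 phi : R) : R :=
  (P1 - c1 phi + beta * c2 * phi) * Qj1 Q1 P1 P2 phi
  + beta * (P2 - c2) * Qj2 Q1 Q2 P1 P2 phi.

(* x is a profit-maximizing durability (durability is a probability in [0,1]). *)
Definition is_argmax01 (f : R -> R) (x : R) : Prop :=
  0 <= x <= 1 /\ forall y, 0 <= y <= 1 -> f y <= f x.

(* Durability affects profit only through the consumer inventory
   Psi_{j2} = phi * Q_{j1}, and by (ii) and (iii) Q_{j1} depends neither on phi
   nor on P_{j2}.  Hence the gain from raising P_{j2} to P_{j2}' at durability
   phi is
     beta [(P_{j2}' - P_{j2}) Q_{j2}(P_{j2}') + (P_{j2} - c_{j2}) (Q_{j2}(P_{j2}') - Q_{j2}(P_{j2}))],
   evaluated at inventory phi * Q_{j1}.  The first term grows with the inventory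
   by (i), the second by the cross-derivative condition (iv), so profit has
   increasing differences in (phi, P_{j2}) and Topkis' argument makes the
   maximizers move up with P_{j2}. *)
From Stdlib Require Import Reals Lra.
From Coquelicot Require Import Coquelicot.
Open Scope R_scope.

Lemma Derive_ge0_nondecreasing (f : R -> R) :
  (forall x, ex_derive f x) -> (forall x, 0 <= Derive f x) ->
  forall x y, x <= y -> f x <= f y.
Proof.
  intros Hd Hpos x y Hxy.
  destruct (MVT_gen f x y (Derive f)) as [c [_ Hc]].
  - intros z _. apply Derive_correct, Hd.
  - intros z _. apply continuity_pt_filterlim.
    apply (ex_derive_continuous (K := R_AbsRing) (V := R_NormedModule)), Hd.
  - assert (0 <= Derive f c * (y - x)) by (apply Rmult_le_pos; [apply Hpos | lra]).
    lra.
Qed.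

Lemma increasing_differences_of_cross_Derive_ge0 (g : R -> R -> R) :
  (forall s p, ex_derive (fun q => g s q) p) ->
  (forall s p, ex_derive (fun x => Derive (fun q => g x q) p) s) ->
  (forall s p, 0 <= Derive (fun x => Derive (fun q => g x q) p) s) ->
  forall s1 s2 p1 p2, s1 <= s2 -> p1 <= p2 ->
  g s1 p2 - g s1 p1 <= g s2 p2 - g s2 p1.
Proof.
  intros Hdp Hdsp Hcross s1 s2 p1 p2 Hs Hp.
  assert (Hslope : forall p, Derive (fun q => g s1 q) p <= Derive (fun q => g s2 q) p).
  { intros p.
    apply (Derive_ge0_nondecreasing (fun x => Derive (fun q => g x q) p)); auto. }
  assert (Hgap : g s2 p1 - g s1 p1 <= g s2 p2 - g s1 p2).
  { apply (Derive_ge0_nondecreasing (fun p => g s2 p - g s1 p)); auto.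
    - intros p. apply (ex_derive_minus (fun q => g s2 q) (fun q => g s1 q)); apply Hdp.
    - intros p.
      rewrite (Derive_minus (fun q => g s2 q) (fun q => g s1 q)) by apply Hdp.
      specialize (Hslope p). simpl in *. lra. }
  lra.
Qed.

Lemma argmax01_increasing_differences (f g : R -> R) (x y : R) :
  (forall a b, 0 <= a -> a <= b -> b <= 1 -> g a - f a <= g b - f b) ->
  is_argmax01 f x -> is_argmax01 g y ->
  is_argmax01 g (Rmax x y) /\ is_argmax01 f (Rmin x y).
Proof.
  intros Hdiff [Hx Hfx] [Hy Hgy].
  destruct (Rle_dec x y) as [Hxy | Hyx].
  - rewrite Rmax_right, Rmin_left by lra. split; split; auto.
  - rewrite Rmax_left, Rmin_right by lra.
    specialize (Hdiff y x ltac:(lra) ltac:(lra) ltac:(lra)).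
    pose proof (Hfx y Hy). pose proof (Hgy x Hx).
    split; split; auto; intros z Hz.
    + specialize (Hgy z Hz). lra.
    + specialize (Hfx z Hz). lra.
Qed.

Section DurabilityChoice.

Variables (beta c2 : R) (c1 : R -> R) (Q1 Q2 : R -> R -> R -> R -> R) (P1 : R).

Hypothesis Q1_indep_phi : forall s p1 p2 f f', Q1 s p1 p2 f = Q1 s p1 p2 f'.
Hypothesis Q2_indep_phi : forall s p2 p1 f f', Q2 s p2 p1 f = Q2 s p2 p1 f'.
Hypothesis Q1_indep_P2 : forall s p1 p2 p2' f, Q1 s p1 p2 f = Q1 s p1 p2' f.

Let q1 := Q1 0 P1 0 0.
Let G (s p : R) := Q2 s p P1 0.

Lemma VF_reduced (P2 phi : R) :
  VF beta c2 c1 Q1 Q2 P1 P2 phi =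
  (P1 - c1 phi + beta * c2 * phi) * q1 + beta * (P2 - c2) * G (phi * q1) P2.
Proof.
  unfold VF, Qj2, Qj1, G, q1.
  rewrite (Q1_indep_phi 0 P1 P2 phi 0), (Q1_indep_P2 0 P1 P2 0 0),
    (Q2_indep_phi _ P2 P1 phi 0).
  reflexivity.
Qed.

Hypothesis beta_ge0 : 0 <= beta.
Hypothesis q1_ge0 : 0 <= q1.
Hypothesis G_nondecreasing : forall p s1 s2, s1 <= s2 -> G s1 p <= G s2 p.
Hypothesis G_increasing_differences :
  forall s1 s2 p1 p2, s1 <= s2 -> p1 <= p2 -> G s1 p2 - G s1 p1 <= G s2 p2 - G s2 p1.

Lemma VF_increasing_differences (P2 P2' phi phi' : R) :
  c2 <= P2 -> P2 <= P2' -> phi' <= phi ->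
  VF beta c2 c1 Q1 Q2 P1 P2' phi' - VF beta c2 c1 Q1 Q2 P1 P2 phi' <=
  VF beta c2 c1 Q1 Q2 P1 P2' phi - VF beta c2 c1 Q1 Q2 P1 P2 phi.
Proof.
  intros HP2c HP2 Hphi.
  rewrite !VF_reduced.
  assert (Hs : phi' * q1 <= phi * q1) by (apply Rmult_le_compat_r; lra).
  assert (Hgain : forall s,
    beta * (P2' - c2) * G s P2' - beta * (P2 - c2) * G s P2 =
    beta * ((P2' - P2) * G s P2' + (P2 - c2) * (G s P2' - G s P2))) by (intros; ring).
  assert (Hmono : beta * ((P2' - P2) * G (phi' * q1) P2' + (P2 - c2) * (G (phi' * q1) P2' - G (phi' * q1) P2))
       <= beta * ((P2' - P2) * G (phi * q1) P2' + (P2 - c2) * (G (phi * q1) P2' - G (phi * q1) P2))).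
  { apply Rmult_le_compat_l; [lra |].
    apply Rplus_le_compat; apply Rmult_le_compat_l; try lra.
    - apply G_nondecreasing, Hs.
    - apply G_increasing_differences; assumption. }
  rewrite <- !Hgain in Hmono. lra.
Qed.

End DurabilityChoice.

Theorem proposition2
  (beta c2 : R) (c1 : R -> R) (Q1 Q2 : R -> R -> R -> R -> R)
  (Hbeta : 0 < beta <= 1)
  (* all functions differentiable *)
  (Hc1 : forall x, ex_derive c1 x)
  (HQ1d : forall s p1 p2 f, ex_derive (fun x => Q1 x p1 p2 f) s)
  (HQ2d : forall s p2 p1 f, ex_derive (fun x => Q2 x p2 p1 f) s)
  (HQ2dP : forall s p2 p1 f, ex_derive (fun p => Q2 s p p1 f) p2)
  (HQ2dPd : forall s p2 p1 f,
      ex_derive (fun x => Derive (fun p => Q2 x p p1 f) p2) s)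
  (* quantities are nonnegative *)
  (HQ1pos : forall s p1 p2 f, 0 <= Q1 s p1 p2 f)
  (* (i) dependence on consumer inventory *)
  (Hi1 : forall s p1 p2 f, 0 <= Derive (fun x => Q1 x p1 p2 f) s)
  (Hi2 : forall s p2 p1 f, 0 <= Derive (fun x => Q2 x p2 p1 f) s)
  (* (ii) no preference for durability per se *)
  (Hii1 : forall s p1 p2 f f', Q1 s p1 p2 f = Q1 s p1 p2 f')
  (Hii2 : forall s p2 p1 f f', Q2 s p2 p1 f = Q2 s p2 p1 f')
  (* (iii) no dependence on future service prices *)
  (Hiii : forall s p1 p2 p2' f, Q1 s p1 p2 f = Q1 s p1 p2' f)
  (* (iv) cross-derivative condition *)
  (Hiv : forall s p2 p1 f,
      0 <= Derive (fun x => Derive (fun p => Q2 x p p1 f) p2) s)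
  (* exogenous service prices: P1 fixed, P2 <= P2', markup nonnegative *)
  (P1 P2 P2' : R) (HP2c : c2 <= P2) (HP2 : P2 <= P2')
  (phi phi' : R)
  (Hphi : is_argmax01 (VF beta c2 c1 Q1 Q2 P1 P2) phi)
  (Hphi' : is_argmax01 (VF beta c2 c1 Q1 Q2 P1 P2') phi') :
  is_argmax01 (VF beta c2 c1 Q1 Q2 P1 P2') (Rmax phi phi') /\
  is_argmax01 (VF beta c2 c1 Q1 Q2 P1 P2) (Rmin phi phi').
Proof.
  apply argmax01_increasing_differences; auto.
  intros a b _ Hab _.
  apply VF_increasing_differences; auto; try lra.
  - intros p s1 s2.
    apply (Derive_ge0_nondecreasing (fun x => Q2 x p P1 0)); auto.
  - apply (increasing_differences_of_cross_Derive_ge0 (fun s p => Q2 s p P1 0)); auto.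
Qed.
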